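(* Let $k\ge4$ be even and $\alpha\ge1$ an integer, and let $G=C(\alpha,\alpha+1,\alpha+2,\dots,\alpha+k-1)$. Then $\omega(G)=a(G)$ $(=\alpha+k-1)$.
   Context: $C(\alpha_1,\dots,\alpha_k)$ is defined recursively by $C(\alpha_1)=\overline{K_{\alpha_1}}$ (edgeless graph) and $C(\alpha_1,\dots,\alpha_i)=\overline{C(\alpha_1,\dots,\alpha_{i-1})\cup K_{\alpha_i}}$ for $i=2,\dots,k$ (disjoint union, then complement). Equivalently for $k$ even, with $\pi_i$ the $\alpha_i$ vertices introduced at step $i$: $\pi_i$ is a clique for $i$ odd, independent for $i$ even, and for $i<j$ vertices of $\pi_i,\pi_j$ are adjacent iff $j$ is even. $\omega(G)$ is the clique number; $a(G)$ is the second smallest eigenvalue of the Laplacian $L=D-A$. *)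

From HB Require Import structures.
From mathcomp Require Import all_boot all_order all_algebra.
Set Implicit Arguments. Unset Strict Implicit. Unset Printing Implicit Defensive.
Import Order.TTheory GRing.Theory Num.Theory.
Local Open Scope ring_scope.

(* A simple graph is a symmetric irreflexive relation e on a finType T. *)

Definition is_clique (T : finType) (e : rel T) (A : {set T}) : bool :=
  [forall x in A, forall y in A, (x != y) ==> e x y].

Definition clique_number (T : finType) (e : rel T) : nat :=
  \max_(A : {set T} | is_clique e A) #|A|.

Definition degree (T : finType) (e : rel T) (x : T) : nat := #|[set y | e x y]|.

Definition laplacian (R : nzRingType) (T : finType) (e : rel T) : 'M[R]_#|T| :=
  \matrix_(i, j) (if i == j then (degree e (enum_val i))%:R
                  else - ((e (enum_val i) (enum_val j))%:R)).

(* "a is the second smallest eigenvalue (with multiplicity) of the Laplacian":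
   the characteristic polynomial factors as prod (X - x) over the nondecreasing
   list s of eigenvalues, and a = s_1 (0-based index 1). Since such a sorted
   factorization is unique, this determines a. *)
Definition is_alg_connectivity (R : rcfType) (T : finType) (e : rel T) (a : R) : Prop :=
  exists s : seq R,
    [/\ sorted <=%R s,
        char_poly (laplacian R e) = \prod_(x <- s) ('X - x%:P) &
        s`_1 = a].

(* The graph C(alpha_1, ..., alpha_k), for k even, via the explicit description:
   vertex (i, j) is the j-th vertex introduced at step i (0-based, so the paper's
   step i+1).  pi_(paper i) is a clique for paper-i odd (our i even), independent
   for paper-i even (our i odd); for steps i < j, all vertices of the two steps
   are adjacent iff paper-j is even (our j odd). *)
Definition CV (k : nat) (alpha : 'I_k -> nat) : finType :=
  {i : 'I_k & 'I_(alpha i)}.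

Definition Cadj (k : nat) (alpha : 'I_k -> nat) : rel (CV alpha) :=
  fun u v =>
    (u != v) &&
    (if tag u == tag v then ~~ odd (tag u)
     else odd (maxn (tag u) (tag v))).
Arguments Cadj {k} alpha.
Arguments CV {k} alpha.

From HB Require Import structures.
From mathcomp Require Import all_boot all_order all_algebra ring zify.
Import Order.TTheory GRing.Theory Num.Theory.

(* We write down an explicit orthogonal eigenbasis of the
   Laplacian, indexed by the vertices themselves: the constant vector (for
   vertex (0,0)), for each step i > 0 a step-constant "level" vector (for
   vertex (i,0)), and for each vertex (i,j0) with j0 > 0 a Helmert vector
   supported on step i.  Orthogonality comes from nested supports: of any two
   basis vectors, one sums to zero and the other is constant on its support.
   Hence char_poly L = prod_u (X - eigval u); the minimum 0 is attained only at
   the constant vector, and when alpha_(k-1) <= alpha_0 + alpha_(k-2) the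
   second smallest eigenvalue is alpha_(k-1), attained by the level vector of
   step k-2.
   Clique number.  For alpha_i = a + i, a clique meets each independent (odd)
   step at most once, so an injective labelling of its vertices by
   [0, a+k-2] bounds it by a+k-1; step k-2 plus one vertex of step k-1 is a
   clique of that size.  Both quantities thus equal a+k-1 = alpha_(k-1). *)

Local Open Scope ring_scope.

Lemma char_poly_eigenbasis {R : fieldType} {n : nat} {L P : 'M[R]_n} {d : 'I_n -> R} :
  P \in unitmx -> L *m P = P *m diag_mx (\row_i d i) ->
  char_poly L = \prod_i ('X - (d i)%:P).
Proof.
move=> Pu LP.
have -> : \prod_i ('X - (d i)%:P) = char_poly (diag_mx (\row_i d i)).
  rewrite char_poly_trig; last exact: diag_mx_is_trig.
  by apply: eq_bigr => i _; rewrite !mxE eqxx mulr1n.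
set D := diag_mx _.
have similar : char_poly_mx L *m map_mx polyC P = map_mx polyC P *m char_poly_mx D.
  rewrite /char_poly_mx mulmxBl mulmxBr -!map_mxM LP; congr (_ - _).
  by rewrite -scalar_mxC.
have := congr1 determinant similar; rewrite !det_mulmx det_map_mx mulrC => /mulfI.
by apply; rewrite polyC_eq0 -unitfE -unitmxE.
Qed.

Lemma unitmx_orthogonal_columns {R : fieldType} {n : nat} {P : 'M[R]_n} {c : 'I_n -> R} :
  (forall i, c i != 0) -> P^T *m P = diag_mx (\row_i c i) -> P \in unitmx.
Proof.
move=> c_neq0 PtP; rewrite unitmxE unitfE.
have := congr1 determinant PtP; rewrite det_mulmx det_tr det_diag.
apply: contra_eq_neq => ->; rewrite mul0r eq_sym.
by apply/prodf_neq0 => i _; rewrite mxE.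
Qed.

Lemma sorted_values_second {R : realDomainType} {I : finType} (f : I -> R) (i0 i1 : I) :
  i1 != i0 -> f i0 < f i1 -> (forall i, i != i0 -> f i1 <= f i) ->
  exists2 s : seq R, sorted <=%R s & perm_eq s [seq f i | i <- enum I] /\ s`_1 = f i1.
Proof.
move=> ne01 lt01 min1.
set d := [seq f i | i <- rem i0 (enum I)].
have ge_d y : y \in d -> f i1 <= y.
  by case/mapP=> i; rewrite (mem_rem_uniq _ (enum_uniq I)) => /andP [ne _] ->; exact: min1.
have sorted_d : sorted <=%R (sort <=%R d) by apply: sort_sorted; exact: le_total.
exists (f i0 :: sort <=%R d).
  rewrite /= (path_sortedE le_trans) sorted_d andbT.
  by apply/allP => y; rewrite mem_sort => /ge_d; apply: le_trans (ltW lt01).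
split.
  apply: (perm_trans (y := f i0 :: d)); first by rewrite perm_cons perm_sort.
  rewrite -map_cons; apply: perm_map; rewrite perm_sym; apply: perm_to_rem.
  by rewrite mem_enum.
have : f i1 \in sort <=%R d.
  by rewrite mem_sort map_f // (mem_rem_uniq _ (enum_uniq I)) inE ne01 mem_enum.
have ge_sd y : y \in sort <=%R d -> f i1 <= y by rewrite mem_sort; exact: ge_d.
move: sorted_d ge_sd.
case: (sort <=%R d) => [//|h t] so ge_h /=; rewrite inE => /orP [/eqP <- //|it].
apply/le_anti; rewrite ge_h ?mem_head // andbT.
by have /allP := order_path_min le_trans so; apply.
Qed.

Lemma alg_connectivity_of_eigenvalues {R : rcfType} {T : finType} {e : rel T}
    {lam : T -> R} {u0 u1 : T} :
  char_poly (laplacian R e) = \prod_u ('X - (lam u)%:P) ->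
  u1 != u0 -> lam u0 < lam u1 -> (forall u, u != u0 -> lam u1 <= lam u) ->
  is_alg_connectivity e (lam u1).
Proof.
move=> cp ne lt min; have [s so [pe s1]] := sorted_values_second lam u0 u1 ne lt min.
by exists s; split => //; rewrite cp (perm_big _ pe) big_map big_enum.
Qed.

(* For k >= 4 even, the last step k-1 is odd (joined to all earlier steps)
   and step k-2 is even (a clique). *)
Section LastSteps.
Context {k : nat} {pen_step last_step : 'I_k}.
Hypotheses (k_ge4 : (4 <= k)%N) (k_even : ~~ odd k).

Lemma odd_last_step : val last_step = k.-1 -> odd last_step.
Proof. by move=> ->; case: k k_ge4 k_even => [|[|kk]] //= _; rewrite negbK. Qed.

Lemma even_pen_step : val pen_step = k.-2 -> ~~ odd pen_step.
Proof. by move=> ->; case: k k_ge4 k_even => [|[|kk]] //= _; rewrite !negbK. Qed.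

End LastSteps.

Section CographSpectrum.
Variables (R : rcfType) (k : nat) (alpha : 'I_k -> nat).
Local Notation V := (CV alpha).

Definition step_adj (s t : 'I_k) : bool := if s == t then ~~ odd s else odd (maxn s t).

Lemma CadjE (u v : V) : Cadj alpha u v = (u != v) && step_adj (tag u) (tag v).
Proof. by []. Qed.

Lemma step_adj_lt (s t : 'I_k) : (s < t)%N -> step_adj s t = odd t.
Proof. by move=> h; rewrite /step_adj -val_eqE (ltn_eqF h) (maxn_idPr (ltnW h)). Qed.

Lemma step_adj_gt (s t : 'I_k) : (t < s)%N -> step_adj s t = odd s.
Proof. by move=> h; rewrite /step_adj -val_eqE (gtn_eqF h) (maxn_idPl (ltnW h)). Qed.

Lemma CV_eq {u u' : V} : tag u = tag u' -> (tagged u : nat) = tagged u' -> u = u'.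
Proof. by case: u => i j; case: u' => i' j' /= e; subst i' => /val_inj ->. Qed.

Lemma sum_over_steps (F : V -> R) :
  \sum_(y : V) F y =
  \sum_(t : 'I_k) \sum_(j : 'I_(alpha t)) F (Tagged (fun i : 'I_k => 'I_(alpha i)) j).
Proof.
rewrite (sig_big_dep xpredT (fun i => xpredT)
  (fun i j => F (Tagged (fun i : 'I_k => 'I_(alpha i)) j))) /=.
by apply: eq_bigr => -[i j].
Qed.

Lemma sum_split_at (G : 'I_k -> R) (i : 'I_k) :
  \sum_t G t = \sum_(t : 'I_k | (t < i)%N) G t + G i + \sum_(t : 'I_k | (i < t)%N) G t.
Proof.
rewrite (bigD1 i) //= (bigID (fun t : 'I_k => (t < i)%N)) /= addrCA addrA.
by congr (_ + _ + _); apply: eq_bigl => t; rewrite -val_eqE /=; case: ltngtP.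
Qed.

Definition lap (x y : V) : R :=
  if x == y then (degree (Cadj alpha) x)%:R else - ((Cadj alpha x y)%:R).

Lemma lap_act (f : V -> R) (x : V) :
  \sum_y lap x y * f y = \sum_y (step_adj (tag x) (tag y))%:R * (f x - f y).
Proof.
have deg : (degree (Cadj alpha) x)%:R = \sum_y ((Cadj alpha x y)%:R : R).
  rewrite /degree -sum1_card natr_sum big_mkcond /=.
  by apply: eq_bigr => y _; rewrite inE; case: (Cadj _ x y).
rewrite (bigD1 x) //= /lap eqxx deg.
transitivity (\sum_y ((Cadj alpha x y)%:R : R) * (f x - f y)).
  under [RHS]eq_bigr do rewrite mulrBr.
  rewrite sumrB -mulr_suml; congr (_ + _).
  rewrite [in RHS](bigD1 x) //= {1}CadjE eqxx /= mul0r add0r -sumrN.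
  by apply: eq_bigr => y nyx; rewrite eq_sym (negbTE nyx) mulNr.
apply: eq_bigr => y _; rewrite CadjE.
by case: eqP => [->|//]; rewrite subrr !mulr0.
Qed.

Lemma lap_act_blocks (F : 'I_k -> nat -> R) (x : V) :
  \sum_y lap x y * F (tag y) (tagged y)
  = \sum_t (step_adj (tag x) t)%:R * ((alpha t)%:R * F (tag x) (tagged x)
                                      - \sum_(j < alpha t) F t j).
Proof.
rewrite (lap_act (fun y => F (tag y) (tagged y))) sum_over_steps.
apply: eq_bigr => t _.
transitivity (\sum_(j < alpha t) (step_adj (tag x) t)%:R * (F (tag x) (tagged x) - F t j)).
  by apply: eq_bigr.
by rewrite -mulr_sumr sumrB sumr_const card_ord !mulr_natl.
Qed.

Definition prefix_size (i : 'I_k) : nat := \sum_(t < k | (t < i)%N) alpha t.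

Lemma prefix_sizeE (i : 'I_k) :
  (prefix_size i)%:R = \sum_(t : 'I_k | (t < i)%N) (alpha t)%:R :> R.
Proof. by rewrite /prefix_size natr_sum. Qed.

Definition level_vec (i t : 'I_k) : R :=
  if (t < i)%N then (alpha i)%:R else if t == i then - (prefix_size i)%:R else 0.

Definition level_eig (i : 'I_k) : R :=
  (odd i)%:R * (alpha i + prefix_size i)%:R
  + \sum_(t : 'I_k | (i < t)%N) (odd t)%:R * (alpha t)%:R.

Lemma level_vec_lt {i t : 'I_k} : (t < i)%N -> level_vec i t = (alpha i)%:R.
Proof. by rewrite /level_vec => ->. Qed.

Lemma level_vec_gt {i t : 'I_k} : (i < t)%N -> level_vec i t = 0.
Proof. by move=> h; rewrite /level_vec ltnNge (ltnW h) /= -val_eqE (gtn_eqF h). Qed.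

Lemma level_vec_diag (i : 'I_k) : level_vec i i = - (prefix_size i)%:R.
Proof. by rewrite /level_vec ltnn eqxx. Qed.

(* The level vector is an eigenvector of the quotient (step) matrix. *)
Lemma level_vec_eig (i s : 'I_k) :
  \sum_t (step_adj s t)%:R * (alpha t)%:R * (level_vec i s - level_vec i t)
  = level_eig i * level_vec i s.
Proof.
rewrite (sum_split_at _ i) /level_eig level_vec_diag.
case: (ltngtP s i) => [slt|sgt|/val_inj ->].
- rewrite (level_vec_lt slt) opprK.
  under eq_bigr => t ht do rewrite level_vec_lt // subrr mulr0.
  rewrite big1_eq add0r step_adj_lt // mulrDl natrD; congr (_ + _); first ring.
  rewrite mulr_suml; apply: eq_bigr => t ht.
  by rewrite level_vec_gt // subr0 step_adj_lt ?(ltn_trans slt) //; ring.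
- rewrite (level_vec_gt sgt) sub0r opprK mulr0.
  under [X in _ + X = _]eq_bigr => t ht do rewrite level_vec_gt // subrr mulr0.
  rewrite big1_eq addr0.
  under eq_bigr => t ht do rewrite level_vec_lt // step_adj_gt ?(ltn_trans ht) //.
  rewrite step_adj_gt // prefix_sizeE mulr_sumr -big_split /=.
  by apply: big1 => t _; ring.
- rewrite level_vec_diag subrr mulr0 addr0.
  under eq_bigr => t ht do rewrite level_vec_lt // step_adj_gt //.
  under [X in _ + X = _]eq_bigr => t ht do rewrite level_vec_gt // step_adj_lt //.
  rewrite mulrDl; congr (_ + _); last first.
    by rewrite mulr_suml; apply: eq_bigr => t _; rewrite subr0.
  under eq_bigr do rewrite (mulrC (odd i)%:R) -mulrA.
  by rewrite -mulr_suml -prefix_sizeE natrD; ring.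
Qed.

Definition helmert (j0 j : nat) : R := ((j < j0)%N)%:R - ((j == j0)%N)%:R * j0%:R.

Lemma helmert_sum (n j0 : nat) : (j0 < n)%N -> \sum_(j < n) helmert j0 j = 0.
Proof.
move=> h; rewrite sumrB; apply/eqP; rewrite subr_eq0; apply/eqP.
rewrite -(big_mkord xpredT (fun j => (((j < j0)%N)%:R : R))).
rewrite (big_cat_nat (n := j0) (leq0n j0) (ltnW h)) /=.
rewrite (eq_big_nat _ _ (F2 := fun _ => 1)); last by move=> j /andP [_ ->].
rewrite [X in _ + X](eq_big_nat _ _ (F2 := fun _ => 0)); last first.
  by move=> j /andP [hj _]; rewrite ltnNge hj.
rewrite sumr_const_nat big1_eq addr0 subn0.
rewrite (bigD1 (Ordinal h)) //= eqxx mul1r big1 ?addr0 //.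
by move=> j hj; rewrite -val_eqE /= in hj; rewrite (negbTE hj) mul0r.
Qed.

Definition eigvecF (i : 'I_k) (j0 : nat) (t : 'I_k) (j : nat) : R :=
  if j0 == 0%N then (if i == 0%N :> nat then 1 else level_vec i t)
  else if t == i then helmert j0 j else 0.

Definition eigvec (u x : V) : R := eigvecF (tag u) (tagged u) (tag x) (tagged x).

(* A Helmert vector on step s has eigenvalue sum_t [s ~ t] alpha_t. *)
Definition block_eig (s : 'I_k) : R := \sum_t (step_adj s t)%:R * (alpha t)%:R.

Definition eigval (u : V) : R :=
  if tagged u == 0%N :> nat then (if tag u == 0%N :> nat then 0 else level_eig (tag u))
  else block_eig (tag u).

Lemma eigvec_eig (u x : V) : \sum_y lap x y * eigvec u y = eigval u * eigvec u x.
Proof.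
rewrite /eigvec (lap_act_blocks (eigvecF (tag u) (tagged u))) /eigval.
case: u => i j0 /=; case: x => s js /=; rewrite /eigvecF.
case: eqP => [j00|j0n0].
  case: eqP => [i0|in0].
    by rewrite mul0r; apply: big1 => t _; rewrite sumr_const card_ord mulr1 subrr mulr0.
  rewrite -level_vec_eig; apply: eq_bigr => t _.
  by rewrite sumr_const card_ord -[level_vec i t *+ _]mulr_natl mulrBr mulrBr !mulrA.
have block_sum t : \sum_(j < alpha t) (if t == i then helmert j0 j else 0) = 0.
  by case: eqP => [->|_]; [exact: helmert_sum | rewrite big1_eq].
under eq_bigr do rewrite block_sum subr0 mulrA.
rewrite -mulr_suml -/(block_eig s); case: eqP => [e|_]; last by rewrite !mulr0.
by have -> : block_eig s = block_eig i by rewrite e.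
Qed.

Lemma orthogonal_const_on_support (f g : V -> R) (c : R) :
  \sum_x f x = 0 -> (forall x, f x != 0 -> g x = c) -> \sum_x f x * g x = 0.
Proof.
move=> f_sum0 g_const; transitivity (\sum_x f x * c).
  apply: eq_bigr => x _; have [->|nz] := eqVneq (f x) 0; first by rewrite !mul0r.
  by rewrite g_const.
by rewrite -mulr_suml f_sum0 mul0r.
Qed.

(* u precedes u' when eigvec u sums to zero and eigvec u' is constant on its
   support: Helmert vectors precede the step-constant ones, Helmert vectors of
   one step are ordered by parameter, level vectors by step, and everything
   precedes the constant vector. *)
Definition precedes (u u' : V) : bool :=
  if tagged u != 0%N :> nat then
    (if tagged u' != 0%N :> nat then (tag u != tag u') || (tagged u < tagged u')%N
     else true)
  else [&& tag u != 0%N :> nat, tagged u' == 0%N :> nat &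
           ((tag u < tag u')%N || (tag u' == 0%N :> nat))].

Lemma precedes_total (u u' : V) : u != u' -> precedes u u' || precedes u' u.
Proof.
move=> neq; rewrite /precedes.
case: (eqVneq (tagged u : nat) 0%N) => [h0|h0];
  case: (eqVneq (tagged u' : nat) 0%N) => [h0'|h0'] //=; last first.
- case: (eqVneq (tag u) (tag u')) => [e|//] /=.
  case: ltngtP => //= e'; rewrite ?orbT //.
  by move: neq; rewrite (CV_eq e e') eqxx.
- by rewrite orbT.
case: (eqVneq (tag u : nat) 0%N) => [t0|t0];
  case: (eqVneq (tag u' : nat) 0%N) => [t0'|t0'] /=; rewrite ?orbT //.
  by move: neq; rewrite (CV_eq (val_inj (etrans t0 (esym t0'))) (etrans h0 (esym h0'))) eqxx.
case: ltngtP => //= e.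
by move: neq; rewrite (CV_eq (val_inj e) (etrans h0 (esym h0'))) eqxx.
Qed.

Lemma level_vec_neq0 (i t : 'I_k) : level_vec i t != 0 -> (t <= i)%N.
Proof.
rewrite /level_vec; case: ltnP => [/ltnW //|hit].
by case: (eqVneq t i) => [-> //|_]; rewrite eqxx.
Qed.

Lemma helmert_neq0 (j0 j : nat) : helmert j0 j != 0 -> (j <= j0)%N.
Proof.
rewrite /helmert; case: (ltnP j j0) => [/ltnW //|hj].
by case: (eqVneq j j0) => [-> //|hne]; rewrite mul0r subrr eqxx.
Qed.

Lemma precedes_const_on_support {u u' : V} : precedes u u' ->
  exists c, forall x, eigvec u x != 0 -> eigvec u' x = c.
Proof.
case: u => i j0; case: u' => i' j0'; rewrite /precedes /eigvec /eigvecF /=.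
case: (eqVneq (j0 : nat) 0%N) => [h0|h0];
  case: (eqVneq (j0' : nat) 0%N) => [h0'|h0'] /=; rewrite ?andbF //.
- case: (eqVneq (i : nat) 0%N) => [//|ti] /= /orP [lt|ti'].
    exists (alpha i')%:R => -[t j] /= /level_vec_neq0 h.
    case: (eqVneq (i' : nat) 0%N) => [ti'|_]; first by rewrite ti' in lt.
    by rewrite level_vec_lt // (leq_ltn_trans h lt).
  by exists 1 => -[t j] /=; rewrite ti'.
- move=> _; case: (eqVneq (i' : nat) 0%N) => [ti'|ti']; first by exists 1.
  exists (level_vec i' i) => -[t j] /=.
  by case: (eqVneq t i) => [e _|]; [rewrite e | rewrite eqxx].
case: (eqVneq i i') => [ei|ne] /=; last first.
  move=> _; exists 0 => -[t j] /=; case: (eqVneq t i) => [e _|]; last by rewrite eqxx.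
  by have /negbTE -> : t != i' by rewrite e.
move=> lt; exists 1 => -[t j] /=; case: (eqVneq t i) => [e|]; last by rewrite eqxx.
have -> : (t == i') = true by rewrite e ei eqxx.
move/helmert_neq0 => le; rewrite /helmert (leq_ltn_trans le lt).
by rewrite (ltn_eqF (leq_ltn_trans le lt)) mul0r subr0.
Qed.

Lemma level_vec_sum (i : 'I_k) : \sum_t (alpha t)%:R * level_vec i t = 0.
Proof.
rewrite (sum_split_at _ i) level_vec_diag.
under eq_bigr => t ht do rewrite level_vec_lt //.
under [X in _ + X]eq_bigr => t ht do rewrite level_vec_gt // mulr0.
by rewrite big1_eq addr0 -mulr_suml -prefix_sizeE mulrN mulrC subrr.
Qed.

Lemma eigvec_sum0 (u : V) :
  (tag u != 0%N :> nat) || (tagged u != 0%N :> nat) -> \sum_x eigvec u x = 0.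
Proof.
case: u => i j0 /= nonconst; rewrite sum_over_steps /eigvec /eigvecF /=.
case: eqP => [j00|j0n0].
  move: nonconst; rewrite j00 eqxx orbF => /negbTE ->.
  rewrite -[RHS](level_vec_sum i); apply: eq_bigr => t _.
  by rewrite sumr_const card_ord mulr_natl.
apply: big1 => t _; case: eqP => [->|_]; last by rewrite big1_eq.
exact: helmert_sum.
Qed.

Lemma eigvec_orthogonal (u u' : V) : u != u' -> \sum_x eigvec u x * eigvec u' x = 0.
Proof.
have key v v' : precedes v v' -> \sum_x eigvec v x * eigvec v' x = 0.
  move=> prec; have [c const] := precedes_const_on_support prec.
  apply: orthogonal_const_on_support const; apply: eigvec_sum0.
  move: prec; rewrite /precedes; case: (tagged v != 0%N :> nat); rewrite ?orbT //.
  by case/and3P=> ->.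
move/precedes_total/orP => [prec|prec]; first exact: key.
by under eq_bigr do rewrite mulrC; exact: key.
Qed.

Hypothesis alpha_pos : forall t, (0 < alpha t)%N.

Lemma eigvec_diag_neq0 (u : V) : eigvec u u != 0.
Proof.
case: u => i j0; rewrite /eigvec /eigvecF /=.
case: (eqVneq (j0 : nat) 0%N) => [_|j0n0].
  case: (eqVneq (i : nat) 0%N) => [_|i0]; first exact: oner_neq0.
  rewrite level_vec_diag oppr_eq0 pnatr_eq0 -lt0n.
  have k0 : (0 < k)%N by apply: leq_ltn_trans (ltn_ord i).
  rewrite /prefix_size (bigD1 (Ordinal k0)) /=; last by rewrite lt0n.
  by rewrite addn_gt0 alpha_pos.
by rewrite eqxx /helmert ltnn eqxx mul1r sub0r oppr_eq0 pnatr_eq0.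
Qed.

Lemma eigvec_norm_neq0 (u : V) : \sum_x eigvec u x * eigvec u x != 0.
Proof.
apply/negP => /eqP /psumr_eq0P sq0.
have /eqP := sq0 (fun x _ => ltac:(rewrite -expr2; exact: sqr_ge0)) u isT.
by rewrite mulf_eq0 orbb (negbTE (eigvec_diag_neq0 u)).
Qed.

Lemma char_poly_laplacian :
  char_poly (laplacian R (Cadj alpha)) = \prod_u ('X - (eigval u)%:P).
Proof.
pose P : 'M[R]_#|V| := \matrix_(p, q) eigvec (enum_val q) (enum_val p).
have LP : laplacian R (Cadj alpha) *m P = P *m diag_mx (\row_q eigval (enum_val q)).
  apply/matrixP => p q; rewrite mul_mx_diag !mxE.
  under eq_bigr do rewrite !mxE.
  rewrite mulrC -(eigvec_eig (enum_val q) (enum_val p)) (big_enum_val (A := V)).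
  by apply: eq_bigr => r _; rewrite /lap (inj_eq enum_val_inj).
have PtP : P^T *m P = diag_mx (\row_q (\sum_x eigvec (enum_val q) x * eigvec (enum_val q) x)).
  apply/matrixP => p q; rewrite !mxE.
  under eq_bigr do rewrite !mxE.
  have [->|ne] := eqVneq p q; first by rewrite mulr1n (big_enum_val (A := V)).
  rewrite mulr0n -(big_enum_val (A := V) (fun x => eigvec (enum_val p) x * eigvec (enum_val q) x)).
  by rewrite eigvec_orthogonal // (inj_eq enum_val_inj).
have Pu := unitmx_orthogonal_columns (fun q => eigvec_norm_neq0 (enum_val q)) PtP.
rewrite (char_poly_eigenbasis Pu LP).
by rewrite -(big_enum_val (A := V) (fun x => 'X - (eigval x)%:P)).
Qed.

Lemma sum_ge_term {I : finType} (P : pred I) (F : I -> R) {i0 : I} :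
  P i0 -> (forall i, P i -> 0 <= F i) -> F i0 <= \sum_(i | P i) F i.
Proof.
move=> Pi0 F_ge0; rewrite (bigD1 i0) //= lerDl.
by apply: sumr_ge0 => i /andP [Pi _]; exact: F_ge0.
Qed.

Lemma sum_ge_terms {I : finType} (P : pred I) (F : I -> R) {i0 i1 : I} :
  i0 != i1 -> P i0 -> P i1 -> (forall i, P i -> 0 <= F i) ->
  F i0 + F i1 <= \sum_(i | P i) F i.
Proof.
move=> ne Pi0 Pi1 F_ge0; rewrite (bigD1 i0) //= lerD2l.
apply: (sum_ge_term (fun i => P i && (i != i0))); first by rewrite Pi1 eq_sym.
by move=> i /andP [Pi _]; exact: F_ge0.
Qed.

Lemma natr_mul_ge0 (b : bool) (n : nat) : 0 <= (b%:R * n%:R : R).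
Proof. by rewrite mulr_ge0 ?ler0n. Qed.

Variables (first_step pen_step last_step : 'I_k).
Hypotheses (k_ge4 : (4 <= k)%N) (k_even : ~~ odd k).
Hypotheses (first_stepE : val first_step = 0%N) (pen_stepE : val pen_step = k.-2)
  (last_stepE : val last_step = k.-1).
Hypothesis last_small : (alpha last_step <= alpha first_step + alpha pen_step)%N.

Let odd_last : odd last_step := odd_last_step k_ge4 k_even last_stepE.
Let even_pen : ~~ odd pen_step := even_pen_step k_ge4 k_even pen_stepE.

Let first_lt_pen : (first_step < pen_step)%N.
Proof. by rewrite first_stepE pen_stepE; lia. Qed.

Let pen_lt_last : (pen_step < last_step)%N.
Proof. by rewrite pen_stepE last_stepE; lia. Qed.

Lemma le_last_step (i : 'I_k) : (i <= last_step)%N.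
Proof. by rewrite last_stepE -ltnS prednK ?ltn_ord // (leq_ltn_trans _ (ltn_ord i)). Qed.

Definition const_vtx : V := Tagged (fun i => 'I_(alpha i)) (Ordinal (alpha_pos first_step)).
Definition pen_vtx : V := Tagged (fun i => 'I_(alpha i)) (Ordinal (alpha_pos pen_step)).

Lemma eigval_const_vtx : eigval const_vtx = 0.
Proof. by rewrite /eigval /= first_stepE. Qed.

Lemma eigval_pen_vtx : eigval pen_vtx = (alpha last_step)%:R.
Proof.
rewrite /eigval /= pen_stepE; have -> : (k.-2 == 0)%N = false by apply/eqP; lia.
rewrite /level_eig (negbTE even_pen) mul0r add0r.
rewrite (bigD1 last_step) //=.
rewrite odd_last mul1r big1 ?addr0 // => t /andP [lt ne].
exfalso; move: lt ne (ltn_ord t); rewrite -val_eqE /= last_stepE pen_stepE => h1 h2 h3.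
by move/eqP: h2; lia.
Qed.

(* Every eigenvalue other than the trivial one is at least alpha_(k-1):
   each such eigenvector sees the whole (joined) last step. *)
Lemma eigval_ge_last (x : V) : x != const_vtx -> (alpha last_step)%:R <= eigval x.
Proof.
have first_pen : first_step != pen_step by rewrite -val_eqE /= ltn_eqF.
have first_last := ltn_trans first_lt_pen pen_lt_last.
case: x => i j0 /= ne; rewrite /eigval /=.
case: (eqVneq (j0 : nat) 0%N) => [j00|j0n0].
  case: (eqVneq (i : nat) 0%N) => [i0|i0].
    case/eqP: ne; apply: CV_eq => /=; last by rewrite j00.
    by apply: val_inj; rewrite /= first_stepE.
  rewrite /level_eig; have := le_last_step i; rewrite leq_eqVlt => /orP [/eqP ei|lt].
    have -> : i = last_step by apply: val_inj.
    rewrite odd_last mul1r -[X in X <= _]addr0 natrD -addrA lerD2l.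
    by rewrite addr_ge0 ?ler0n // sumr_ge0 // => t _; apply: natr_mul_ge0.
  rewrite -[X in X <= _]add0r; apply: lerD; first exact: natr_mul_ge0.
  have := sum_ge_term (fun t : 'I_k => (i < t)%N)
    (fun t : 'I_k => (odd t)%:R * (alpha t)%:R) lt (fun t _ => natr_mul_ge0 _ _).
  by rewrite odd_last mul1r.
rewrite /block_eig; have := le_last_step i; rewrite leq_eqVlt => /orP [/eqP ei|lt].
  have -> : i = last_step by apply: val_inj.
  apply: le_trans (sum_ge_terms xpredT (fun t => (step_adj last_step t)%:R * (alpha t)%:R)
    first_pen _ _ (fun t _ => natr_mul_ge0 _ _)) => //.
  by rewrite !step_adj_gt // odd_last !mul1r -natrD ler_nat.
apply: le_trans (sum_ge_term xpredT (fun t => (step_adj i t)%:R * (alpha t)%:R)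
  (i0 := last_step) _ (fun t _ => natr_mul_ge0 _ _)) => //.
by rewrite step_adj_lt // odd_last mul1r.
Qed.

Lemma alg_connectivity_C : is_alg_connectivity (Cadj alpha) ((alpha last_step)%:R : R).
Proof.
rewrite -eigval_pen_vtx.
apply: (alg_connectivity_of_eigenvalues (u0 := const_vtx) char_poly_laplacian).
- by apply/eqP => /(congr1 (fun x : V => val (tag x))) /= /eqP; rewrite gtn_eqF.
- by rewrite eigval_pen_vtx eigval_const_vtx ltr0n alpha_pos.
- by move=> u ne; rewrite eigval_pen_vtx; exact: eigval_ge_last.
Qed.

End CographSpectrum.

Definition arith_steps (k a : nat) (i : 'I_k) : nat := (a + i)%N.

Section CliqueNumber.
Variables (k a : nat).
Hypotheses (k_ge4 : (4 <= k)%N) (k_even : ~~ odd k) (a_ge1 : (1 <= a)%N).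
Local Notation alpha := (arith_steps k a).
Local Notation V := (CV alpha).

Lemma index_lt (x : V) : (tagged x < a + tag x)%N.
Proof. exact: ltn_ord. Qed.

Definition clique_label (x : V) : nat :=
  if odd (tag x) then (a + tag x - 1)%N else tagged x.

Lemma clique_label_le (x : V) : (clique_label x <= a + k - 2)%N.
Proof.
rewrite /clique_label; have := index_lt x; have := ltn_ord (tag x).
case: ifP => odd_t; first lia.
have : (tag x).+1 != k by apply/eqP => e; move: k_even; rewrite -e /= odd_t.
move=> /eqP; lia.
Qed.

Lemma clique_label_adj (x y : V) : Cadj alpha x y -> clique_label x != clique_label y.
Proof.
rewrite CadjE /clique_label => /andP [ne adj]; apply: contra ne => /eqP.
have := index_lt x; have := index_lt y.
case: x adj => tx jx; case: y => ty jy /= adj jy_lt jx_lt.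
case: (ltngtP tx ty) => [lt|gt|/val_inj eq_t].
- rewrite step_adj_lt // in adj; rewrite adj.
  by case: ifP => _ ?; exfalso; lia.
- rewrite step_adj_gt // in adj; rewrite adj.
  by case: ifP => _ ?; exfalso; lia.
subst ty; rewrite /step_adj eqxx in adj; rewrite (negbTE adj) => /val_inj ->.
exact: eqxx.
Qed.

(* Labels are injective on a clique, so a clique has at most a + k - 1 vertices. *)
Lemma clique_card_le (A : {set V}) : is_clique (Cadj alpha) A -> (#|A| <= a + k - 1)%N.
Proof.
move=> clA.
pose f (x : V) : 'I_(a + k - 2).+1 := inord (clique_label x).
have f_inj : {in A &, injective f}.
  move=> x y xA yA /(congr1 val); rewrite /= !inordK ?ltnS ?clique_label_le //.
  move/eqP => eq_lab; apply/eqP; apply: contraLR eq_lab => ne; apply: clique_label_adj.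
  by move/forallP: clA => /(_ x); rewrite xA /= => /forallP /(_ y); rewrite yA ne.
rewrite -(card_in_imset f_inj); apply: leq_trans (max_card _) _.
by rewrite card_ord; lia.
Qed.

Variables (pen_step last_step : 'I_k).
Hypotheses (pen_stepE : val pen_step = k.-2) (last_stepE : val last_step = k.-1).

Lemma last_step_nonempty : (0 < alpha last_step)%N.
Proof. by rewrite /arith_steps; lia. Qed.

(* Step k-2 (a clique) together with one vertex of the last step, which is
   joined to everything before it. *)
Definition last_vtx : V := Tagged (fun i => 'I_(alpha i)) (Ordinal last_step_nonempty).

Definition top_clique : {set V} :=
  last_vtx |: [set Tagged (fun i => 'I_(alpha i)) j | j : 'I_(alpha pen_step)].

Lemma top_clique_is_clique : is_clique (Cadj alpha) top_clique.
Proof.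
have pen_last : (pen_step < last_step)%N by rewrite pen_stepE last_stepE; lia.
have odd_last := odd_last_step k_ge4 k_even last_stepE.
have even_pen := even_pen_step k_ge4 k_even pen_stepE.
have top_tag x : x \in top_clique -> x = last_vtx \/ tag x = pen_step.
  by rewrite !inE => /orP [/eqP -> | /imsetP [j _ ->]]; [left | right].
apply/forallP => x; apply/implyP => /top_tag tx; apply/forallP => y.
apply/implyP => /top_tag ty; apply/implyP => ne; rewrite CadjE ne /=.
case: tx ty ne => [->|->] [->|->] //=; first by rewrite eqxx.
- by rewrite step_adj_gt.
- by rewrite step_adj_lt.
- by rewrite /step_adj eqxx even_pen.
Qed.

Lemma top_clique_card : #|top_clique| = (a + k - 1)%N.
Proof.
rewrite cardsU1 card_in_imset; last first.
  by move=> j j' _ _ /(congr1 (fun x : V => val (tagged x))) /val_inj.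
have -> : last_vtx \notin [set Tagged (fun i => 'I_(alpha i)) j | j : 'I_(alpha pen_step)].
  apply/imsetP => -[j _] /(congr1 (fun x : V => val (tag x))) /=.
  by rewrite last_stepE pen_stepE; lia.
by rewrite card_ord /arith_steps pen_stepE /=; lia.
Qed.

Lemma clique_number_arith : clique_number (Cadj alpha) = (a + k - 1)%N.
Proof.
apply/eqP; rewrite eqn_leq; apply/andP; split.
  by apply/bigmax_leqP => A; exact: clique_card_le.
by rewrite -top_clique_card; apply: leq_bigmax_cond; exact: top_clique_is_clique.
Qed.

End CliqueNumber.

Theorem corollary5p6 (R : rcfType) (k a : nat) :
  (4 <= k)%N -> ~~ odd k -> (1 <= a)%N ->
  let alpha := fun i : 'I_k => (a + i)%N in
  is_alg_connectivity (Cadj alpha) ((clique_number (Cadj alpha))%:R : R) /\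
  clique_number (Cadj alpha) = (a + k - 1)%N.
Proof.
move=> k_ge4 k_even a_ge1 alpha.
have [lt0 lt2 lt1] : [/\ (0 < k)%N, (k.-2 < k)%N & (k.-1 < k)%N] by split; lia.
pose first_step : 'I_k := Ordinal lt0.
pose pen_step : 'I_k := Ordinal lt2.
pose last_step : 'I_k := Ordinal lt1.
have omega : clique_number (Cadj alpha) = (a + k - 1)%N :=
  @clique_number_arith k a k_ge4 k_even a_ge1 pen_step last_step erefl erefl.
split => //; rewrite omega (_ : (a + k - 1)%N = alpha last_step); last by rewrite /alpha /=; lia.
apply: (@alg_connectivity_C R k alpha _ first_step pen_step last_step) => //.
- by move=> t; rewrite /alpha; lia.
- by rewrite /alpha /=; lia.
Qed.
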